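(* Let $m>2$ be an odd integer, $n\ge 1$ an integer, and let $M_{2mn}=\langle a,b : a^m=b^{2n}=1,\ bab^{-1}=a^{-1}\rangle$ be the metacyclic group of order $2mn$. Let $\Gamma_{M_{2mn}}$ be its non-commuting graph. Let $t_1,t_2$ be the two roots of the equation $(m-1)x^2-(2m-5)x-m=0$. Then the spectrum of the distance signless Laplacian matrix $D^Q(\Gamma_{M_{2mn}})$ (eigenvalues counted with multiplicity, multiplicities being added if two of the listed values coincide) consists of: (a) $2mn-4$ with multiplicity $m(n-1)$; (b) $(2m+1)n-4$ with multiplicity $m-1$; (c) $(3m-2)n-4$ with multiplicity $(m-1)n-1$; (d) $nt_k(m-1)+(3mn+n-4)$ with multiplicity $1$, for each $k=1,2$.
   Context: For a finite non-abelian group $G$ with centre $Z(G)$, the non-commuting graph $\Gamma_G$ is the simple undirected graph with vertex set $G\setminus Z(G)$, in which two distinct vertices $u,v$ are adjacent if and only if $uv\ne vu$. For a connected graph $H$, $d_{uv}$ denotes the length of a shortest path between $u$ and $v$; the distance matrix $D(H)$ has $(u,v)$-entry $d_{uv}$. The transmission of a vertex $v$ is $\sum_{u} d_{uv}$, and $Tr(H)$ is the diagonal matrix of vertex transmissions. The distance signless Laplacian matrix is $D^Q(H)=Tr(H)+D(H)$. *)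

From HB Require Import structures.
From mathcomp Require Import all_boot all_order all_algebra all_fingroup.
From mathcomp Require Import center.
Set Implicit Arguments. Unset Strict Implicit. Unset Printing Implicit Defensive.
Import GRing.Theory Num.Theory.

Section NCG.
Variables (gT : finGroupType) (G : {group gT}).

Definition ncg_vertex := {x : gT | x \in G :\: 'Z(G)%g}.

Definition ncg_adj (u v : ncg_vertex) : bool :=
  (u != v) && (val u * val v != val v * val u)%g.

Fixpoint ncg_walk (k : nat) (u v : ncg_vertex) : bool :=
  if k is k'.+1 then [exists w, ncg_adj u w && ncg_walk k' w v] else u == v.

(* d_uv = length of a shortest path (= shortest walk) from u to v
   (for a connected graph some such length is < #|V|) *)
Definition ncg_dist (u v : ncg_vertex) : nat :=
  find (fun k => ncg_walk k u v) (iota 0 #|{: ncg_vertex}|).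

Definition ncg_trans (v : ncg_vertex) : nat := \sum_(u : ncg_vertex) ncg_dist u v.

Local Open Scope ring_scope.
Definition ncg_DQ (R : nzRingType) : 'M[R]_#|{: ncg_vertex}| :=
  \matrix_(i, j)
    ((i == j)%:R * (ncg_trans (enum_val i))%:R + (ncg_dist (enum_val i) (enum_val j))%:R).

End NCG.

From mathcomp Require Import all_boot all_order all_algebra all_fingroup.
From mathcomp Require Import center cyclic.
From mathcomp Require Import ring lra zify.
Import GRing.Theory Num.Theory.
Local Open Scope ring_scope.

(* Every element of M_2mn is a^i b^j (i < m, j < 2n) in exactly one way, and, m
   being odd, two non-central elements commute iff they lie in the same part of
     {a^i b^j | i <> 0, j even}  (size (m-1)n)  and  {a^i b^j | j odd}, i < m
   (m parts of size n).  So the non-commuting graph is complete multipartite,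
   with distance 1 across parts and 2 inside a part.  On vectors supported on
   one part with zero sum, D^Q acts as the scalar |V| + |part| - 4, which gives
   2mn - 4 and (3m-2)n - 4; on part-wise constant vectors it acts through the
   (m+1) x (m+1) quotient matrix, with eigenvalue (2m+1)n - 4 on the vectors
   vanishing on the big part with zero sum, and the two eigenvalues attached to
   t1 and t2 on the rest.  In a basis adapted to this decomposition D^Q becomes
   triangular. *)

Lemma char_poly_trmx (R : comNzRingType) N (A : 'M[R]_N) :
  char_poly A^T = char_poly A.
Proof.
rewrite /char_poly -det_tr; congr (\det _); apply/matrixP => i j.
by rewrite !mxE eq_sym.
Qed.

Lemma char_poly_one_offdiag (R : comNzRingType) N (A : 'M[R]_N) (p q : 'I_N) :
  (forall i j, i != j -> (i != p) || (j != q) -> A i j = 0) ->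
  char_poly A = \prod_i ('X - (A i i)%:P).
Proof.
move=> A0; have [lt_qp | le_pq] := ltnP q p.
  apply/char_poly_trig/is_trig_mxP => i j lt_ij; apply: A0.
    by rewrite -val_eqE neq_ltn lt_ij.
  by apply: contraTT lt_ij => /norP[/negPn/eqP-> /negPn/eqP->]; rewrite -leqNgt ltnW.
rewrite -char_poly_trmx char_poly_trig.
  by apply: eq_bigr => i _; rewrite mxE.
apply/is_trig_mxP => i j lt_ij; rewrite mxE; apply: A0.
  by rewrite -val_eqE neq_ltn lt_ij orbT.
by apply: contraTT lt_ij => /norP[/negPn/eqP-> /negPn/eqP->]; rewrite -leqNgt.
Qed.

Lemma char_poly_conj {F : fieldType} {N : nat} {A P T : 'M[F]_N} :
  \det P != 0 -> A *m P = P *m T -> char_poly A = char_poly T.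
Proof.
move=> detP APT.
have: char_poly_mx A *m map_mx polyC P = map_mx polyC P *m char_poly_mx T.
  by rewrite /char_poly_mx mulmxBl mulmxBr -!map_mxM APT scalar_mxC.
move/(congr1 determinant); rewrite !det_mulmx det_map_mx [LHS]mulrC.
by move/mulfI; apply; rewrite polyC_eq0.
Qed.

Lemma big_enum_valT {V : finType} {S : Type} {idx : S} {op : Monoid.com_law idx}
    (F : V -> S) :
  \big[op/idx]_(i < #|{: V}|) F (enum_val i) = \big[op/idx]_v F v.
Proof. by rewrite -(big_enum_val F); apply: eq_bigl => v; rewrite inE. Qed.

Section FunMatrix.
Variables (R : comNzRingType) (V : finType).

Definition fun_mx (F : V -> V -> R) : 'M[R]_#|{: V}| :=
  \matrix_(i, j) F (enum_val i) (enum_val j).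

Lemma mul_fun_mx (F G : V -> V -> R) :
  fun_mx F *m fun_mx G = fun_mx (fun x y => \sum_z F x z * G z y).
Proof.
apply/matrixP => i j; rewrite !mxE.
rewrite -(big_enum_valT (fun z => F (enum_val i) z * G z (enum_val j))).
by apply: eq_bigr => k _; rewrite !mxE.
Qed.

Lemma char_poly_fun_mx_one_offdiag (F : V -> V -> R) (p q : V) :
  (forall x y, x != y -> (x != p) || (y != q) -> F x y = 0) ->
  char_poly (fun_mx F) = \prod_v ('X - (F v v)%:P).
Proof.
move=> F0; rewrite (@char_poly_one_offdiag _ _ _ (enum_rank p) (enum_rank q)).
  rewrite -(big_enum_valT (fun v => 'X - (F v v)%:P)).
  by apply: eq_bigr => i _; rewrite mxE.
move=> i j; rewrite mxE -(inj_eq enum_val_inj) => ij pq; apply: F0 => //.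
by move: pq; rewrite -{1}[i]enum_valK -{1}[j]enum_valK !(inj_eq enum_rank_inj).
Qed.

End FunMatrix.
Arguments fun_mx {R V} F.

Lemma det_fun_mx_neq0 {R : idomainType} {V : finType} {F : V -> V -> R} :
  (forall h : V -> R, (forall y, \sum_x h x * F x y = 0) -> forall x, h x = 0) ->
  \det (fun_mx F) != 0.
Proof.
move=> F_free; apply/negP => /det0P[v /eqP nz vF]; apply: nz.
apply/rowP => j; rewrite mxE -[j]enum_valK.
apply: (F_free (fun x => v 0 (enum_rank x))) => y.
rewrite -(big_enum_valT (fun x => v 0 (enum_rank x) * F x y)) /=.
transitivity ((v *m fun_mx F) 0 (enum_rank y)); last by rewrite vF mxE.
by rewrite mxE; apply: eq_bigr => i _; rewrite !mxE enum_valK enum_rankK.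
Qed.

Lemma big_option {I : finType} {S : Type} {idx : S} {op : Monoid.com_law idx}
    (F : option I -> S) :
  \big[op/idx]_k F k = op (F None) (\big[op/idx]_i F (Some i)).
Proof.
rewrite (bigD1 None) //=; congr (op _ _).
rewrite (reindex_omap Some id) //=; last by case.
by apply: eq_bigl => i; rewrite eqxx.
Qed.

Lemma sum_indicator {R : nzRingType} {V : finType} (y : V) (F : V -> R) :
  \sum_z (z == y)%:R * F z = F y.
Proof.
by rewrite (bigD1 y) //= eqxx mul1r big1 ?addr0 // => z /negbTE->; rewrite mul0r.
Qed.

Lemma sum_indicator_cond {R : nzRingType} {V : finType} (P : pred V) (y : V) :
  \sum_(z | P z) (z == y)%:R = (P y)%:R :> R.
Proof.
rewrite big_mkcond (bigD1 y) //= eqxx big1 ?addr0 => [|z /negbTE->]; last by case: (P z).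
by case: (P y).
Qed.

Lemma card_ord_parity k (c : bool) : #|[set j : 'I_(2 * k) | odd j == c]| = k.
Proof.
rewrite -sum1_card big_mkcond /=.
under eq_bigr do rewrite inE.
rewrite -(big_mkord xpredT (fun j => if odd j == c then 1 else 0)%N).
elim: k => [|k IH]; first by rewrite big_geq.
rewrite mulnS add2n !big_nat_recr //= IH mul2n odd_double.
by case: c {IH}; rewrite /= ?addn0 ?addn1.
Qed.

Lemma scaled_quadratic_roots (R : comNzRingType) (c b0 c0 t1 t2 : R) :
  c *: (('X - t1%:P) * ('X - t2%:P)) = c *: 'X^2 - b0 *: 'X - c0%:P ->
  c * t1 ^+ 2 - b0 * t1 - c0 = 0 /\ c * (t1 + t2) = b0.
Proof.
move=> E; split.
  move: (congr1 (horner^~ t1) E).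
  rewrite /= hornerZ hornerM !hornerXsubC !hornerD !hornerN !hornerZ.
  by rewrite hornerXn hornerX hornerC => <-; ring.
have prod_roots : ('X - t1%:P) * ('X - t2%:P) = 'X^2 - (t1 + t2) *: 'X + (t1 * t2)%:P.
  by rewrite -mul_polyC polyCD polyCM; ring.
move: (congr1 (coefp 1) E); rewrite prod_roots /= !coefE /=.
by rewrite !(mulr1, sub0r, addr0, subr0, mulr0) mulrN => /oppr_inj.
Qed.

Section MultipartiteDistance.
Variables (V : finType) (K : eqType) (key : V -> K).

Definition multipartite_dist (u v : V) : nat :=
  if u == v then 0 else if key u == key v then 2 else 1.

Definition multipartite_trans (v : V) : nat := (\sum_u multipartite_dist u v)%N.

Definition multipartite_DQ (R : nzRingType) (x y : V) : R :=
  (x == y)%:R * (multipartite_trans x)%:R + (multipartite_dist x y)%:R.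

Lemma multipartite_distC u v : multipartite_dist u v = multipartite_dist v u.
Proof. by rewrite /multipartite_dist eq_sym [key v == _]eq_sym. Qed.

End MultipartiteDistance.
Arguments multipartite_dist {V K} key u v.
Arguments multipartite_trans {V K} key v.
Arguments multipartite_DQ {V K} key {R} x y.

Section CompleteMultipartite.
Variables (R : realFieldType) (V : finType) (m n : nat).
Variables (key : V -> option 'I_m) (rep : option 'I_m -> V) (i0 : 'I_m).
Hypothesis repK : cancel rep key.
Hypotheses (m_gt2 : (2 < m)%N) (n_gt0 : (0 < n)%N).

Definition part_size (k : option 'I_m) : nat :=
  if k is Some _ then n else ((m - 1) * n)%N.
Hypothesis card_part : forall k, #|[pred v | key v == k]| = part_size k.

Lemma natr_pred_m : (m - 1)%:R = m%:R - 1 :> R.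
Proof. by rewrite natrB //; lia. Qed.

Lemma part_sizeE k :
  (part_size k)%:R = (if k is Some _ then n%:R else (m%:R - 1) * n%:R) :> R.
Proof. by case: k => [i|] //=; rewrite natrM natr_pred_m. Qed.

Lemma sum_part k (F : option 'I_m -> R) :
  \sum_(z | key z == k) F (key z) = (part_size k)%:R * F k.
Proof.
rewrite (eq_bigr (fun=> F k)) => [|z /eqP-> //].
by rewrite sumr_const -card_part mulr_natl.
Qed.

Lemma sum_by_part (F : option 'I_m -> R) :
  \sum_z F (key z) = \sum_k (part_size k)%:R * F k.
Proof.
by rewrite (partition_big key predT) //=; apply: eq_bigr => k _; apply: sum_part.
Qed.

Lemma natr_card_V : #|V|%:R = (2 * m%:R - 1) * n%:R :> R.
Proof.
rewrite -sum1_card natr_sum (sum_by_part (fun=> 1)) big_option (part_sizeE None) /=.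
by rewrite sumr_const card_ord -mulr_natl; ring.
Qed.

Lemma multipartite_distE x z :
  (multipartite_dist key x z)%:R = 1 + (key z == key x)%:R - 2 * (z == x)%:R :> R.
Proof.
rewrite /multipartite_dist [key x == _]eq_sym; have [-> | _] := eqVneq z x.
  by rewrite !eqxx /=; ring.
by case: (key z == key x); rewrite /=; ring.
Qed.

Lemma sum_multipartite_dist x (h : V -> R) :
  \sum_z (multipartite_dist key x z)%:R * h z =
    \sum_z h z + \sum_(z | key z == key x) h z - 2 * h x.
Proof.
under eq_bigr do rewrite multipartite_distE mulrBl mulrDl mul1r -mulrA.
rewrite sumrB big_split /= -mulr_sumr sum_indicator; congr (_ + _ - _).
by rewrite [in RHS]big_mkcond; apply: eq_bigr => z _; case: eqP; rewrite /= ?mul1r ?mul0r.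
Qed.

Lemma multipartite_transE x :
  (multipartite_trans key x)%:R = #|V|%:R + (part_size (key x))%:R - 2 :> R.
Proof.
rewrite natr_sum; under eq_bigr do rewrite multipartite_distC -[_%:R]mulr1.
rewrite sum_multipartite_dist sumr_const (sum_part (key x) (fun=> 1)).
by rewrite -mulr_natl; ring.
Qed.

Lemma multipartite_DQ_apply (h : V -> R) x :
  \sum_z multipartite_DQ key x z * h z =
    (#|V|%:R + (part_size (key x))%:R - 4) * h x
    + \sum_z h z + \sum_(z | key z == key x) h z.
Proof.
under eq_bigr do rewrite mulrDl eq_sym -mulrA.
by rewrite big_split /= sum_indicator sum_multipartite_dist multipartite_transE; ring.
Qed.

Lemma multipartite_DQ_apply_blocks (g : option 'I_m -> R) x :
  \sum_z multipartite_DQ key x z * g (key z) =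
    (#|V|%:R + 2 * (part_size (key x))%:R - 4) * g (key x)
    + \sum_k (part_size k)%:R * g k.
Proof. by rewrite (multipartite_DQ_apply (g \o key)) /= sum_by_part sum_part; ring. Qed.

Variables t1 t2 : R.
Hypothesis t1_root : (m - 1)%:R * t1 ^+ 2 - (2 * m - 5)%:R * t1 - m%:R = 0.
Hypothesis roots_sum : (m - 1)%:R * (t1 + t2) = (2 * m - 5)%:R.

Definition root_eigenvalue (t : R) : R :=
  n%:R * t * (m - 1)%:R + (3 * m * n + n - 4)%:R.

Lemma root_eigenvalueE t :
  root_eigenvalue t = n%:R * t * (m%:R - 1) + (3 * m%:R * n%:R + n%:R - 4).
Proof. by rewrite /root_eigenvalue natr_pred_m natrB ?natrD ?natrM //; nia. Qed.

(* [quot_vec k] is column [rep k] of the change of basis, as a function of the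
   part: the t1-eigenvector of the quotient matrix for [None], zero-sum vectors
   for [Some i], i <> i0, and for [Some i0] the indicator of the big part, which
   leaves a triangular 2 x 2 block whose diagonal entries belong to t1 and t2.
   The other columns are the zero-sum vectors e_y - e_(rep (key y)). *)
Definition quot_vec (k k' : option 'I_m) : R :=
  match k with
  | None => if k' is None then t1 else 1
  | Some i => if i == i0 then (k' == None)%:R
              else (k' == Some i)%:R - (k' == Some i0)%:R
  end.

Definition quot_eigenvalue (k : option 'I_m) : R :=
  match k with
  | None => root_eigenvalue t1
  | Some i => if i == i0 then root_eigenvalue t2 else (2 * m%:R + 1) * n%:R - 4
  end.

Lemma sum_part_quot_vec k :
  \sum_k' (part_size k')%:R * quot_vec k k' =
    match k with
    | None => (m%:R - 1) * n%:R * t1 + m%:R * n%:R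
    | Some i => if i == i0 then (m%:R - 1) * n%:R else 0
    end.
Proof.
rewrite big_option (part_sizeE None) /=; case: k => [i|] /=; last first.
  by rewrite sumr_const card_ord -mulr_natl; ring.
have [_ | _] := eqVneq i i0; first by rewrite big1 ?mulr0 ?mulr1 ?addr0.
under eq_bigr do rewrite !(inj_eq Some_inj) mulrBr ![n%:R * _]mulrC.
by rewrite sumrB !sum_indicator !subrr mulr0 addr0.
Qed.

Lemma quot_vec_eigen k k' :
  (#|V|%:R + 2 * (part_size k')%:R - 4) * quot_vec k k'
  + \sum_k'' (part_size k'')%:R * quot_vec k k'' =
  quot_eigenvalue k * quot_vec k k'
  + (k == Some i0)%:R * ((m%:R - 1) * n%:R) * quot_vec None k'.
Proof.
have e5 : (2 * m - 5)%:R = 2 * m%:R - 5 :> R by rewrite natrB ?natrM //; lia.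
move: t1_root roots_sum; rewrite natr_pred_m e5 => root1 sum12.
rewrite sum_part_quot_vec natr_card_V part_sizeE.
case: k => [i|] /=; rewrite ?root_eigenvalueE; last first.
  case: k' => [j|] /=; first lra.
  by have := congr1 (fun z => n%:R * z) root1; rewrite /=; lra.
rewrite (inj_eq Some_inj); have [_ | _] := eqVneq i i0.
  case: k' => [j|] /=; first lra.
  by have := congr1 (fun z => n%:R * z) sum12; rewrite /=; lra.
case: k' => [j|] /=; rewrite ?(inj_eq Some_inj); last by lra.
by case: (j == i); case: (j == i0); rewrite /=; lra.
Qed.

Definition is_rep (y : V) : bool := y == rep (key y).

Definition basis (z y : V) : R :=
  if is_rep y then quot_vec (key y) (key z)
  else (z == y)%:R - (z == rep (key y))%:R.

Definition eigenvalue (y : V) : R :=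
  if is_rep y then quot_eigenvalue (key y)
  else #|V|%:R + (part_size (key y))%:R - 4.

Definition DQ_triangular (z y : V) : R :=
  if z == y then eigenvalue y
  else if (z == rep None) && (y == rep (Some i0)) then (m%:R - 1) * n%:R else 0.

Lemma is_rep_rep k : is_rep (rep k).
Proof. by rewrite /is_rep repK. Qed.

Lemma basis_rep z k : basis z (rep k) = quot_vec k (key z).
Proof. by rewrite /basis is_rep_rep repK. Qed.

Lemma rep_None_neq : rep None != rep (Some i0).
Proof. by rewrite (can_eq repK). Qed.

Lemma sum_basis_triangular x y :
  \sum_z basis x z * DQ_triangular z y =
    basis x y * eigenvalue y
    + (y == rep (Some i0))%:R * ((m%:R - 1) * n%:R) * basis x (rep None).
Proof.
rewrite (bigD1 y) //= /DQ_triangular eqxx; congr (_ + _).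
have [-> | ny] := eqVneq y (rep (Some i0)); last first.
  by rewrite !mul0r; apply: big1 => z zy; rewrite (negbTE zy) andbF mulr0.
rewrite (bigD1 (rep None)) ?rep_None_neq //= (negbTE rep_None_neq) !eqxx mul1r mulrC.
by rewrite big1 ?addr0 // => z /andP[zy /negbTE->]; rewrite (negbTE zy) mulr0.
Qed.

Lemma multipartite_DQ_basis x y :
  \sum_z multipartite_DQ key x z * basis z y = \sum_z basis x z * DQ_triangular z y.
Proof.
rewrite sum_basis_triangular.
have [/eqP-> | nry] := boolP (is_rep y).
  under eq_bigr do rewrite basis_rep.
  rewrite multipartite_DQ_apply_blocks !basis_rep /eigenvalue is_rep_rep !repK.
  rewrite (can_eq repK).
  by rewrite [quot_vec _ _ * _]mulrC; apply: quot_vec_eigen.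
have -> : (y == rep (Some i0)) = false.
  by apply: contraNF nry => /eqP->; apply: is_rep_rep.
rewrite !mul0r addr0 multipartite_DQ_apply /basis /eigenvalue (negbTE nry).
rewrite !sumrB (sum_indicator_cond predT) !sum_indicator_cond repK !subrr !addr0.
have [-> | _] := eqVneq x y; first by rewrite mulrC.
have [-> | _] := eqVneq x (rep (key y)); first by rewrite repK mulrC.
by rewrite subrr mulr0 mul0r.
Qed.

Lemma part_size_mul_eq0 k (x : R) : (part_size k)%:R * x = 0 -> x = 0.
Proof.
move/eqP; rewrite mulf_eq0 pnatr_eq0 => /orP[/eqP k0 | /eqP //].
by move: k0; case: k => [i|] /=; nia.
Qed.

Lemma quot_vec_free (g : option 'I_m -> R) :
  (forall k, \sum_k' (part_size k')%:R * g k' * quot_vec k k' = 0) ->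
  forall k, g k = 0.
Proof.
move=> gq.
have gN : g None = 0.
  have := gq (Some i0); rewrite big_option /= eqxx mulr1 big1 ?addr0 => [|i _].
    exact: (part_size_mul_eq0 None).
  by rewrite mulr0.
have gS i : g (Some i) = g (Some i0).
  have [-> // | ni] := eqVneq i i0.
  have := gq (Some i); rewrite big_option /= (negbTE ni) subrr mulr0 add0r.
  under eq_bigr do rewrite !(inj_eq Some_inj) mulrBr !(mulrC _ (_ == _)%:R).
  rewrite sumrB !sum_indicator -mulrBr => /(part_size_mul_eq0 (Some i)).
  by move/eqP; rewrite subr_eq0 => /eqP.
have gS0 : g (Some i0) = 0.
  have := gq None; rewrite big_option /= gN mulr0 mul0r add0r.
  under eq_bigr do rewrite gS mulr1.
  rewrite sumr_const card_ord => /eqP; rewrite mulrn_eq0 => /orP[/eqP m0 | /eqP].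
    by exfalso; lia.
  exact: (part_size_mul_eq0 (Some i0)).
by case=> [i|] //; rewrite gS.
Qed.

Lemma basis_free (h : V -> R) :
  (forall y, \sum_x h x * basis x y = 0) -> forall x, h x = 0.
Proof.
move=> hB.
have h_parts x : h x = h (rep (key x)).
  have [/eqP<- // | nrx] := boolP (is_rep x).
  apply/eqP; rewrite -subr_eq0 -(hB x) /basis (negbTE nrx).
  under eq_bigr do rewrite mulrBr !(mulrC (h _)).
  by rewrite sumrB !sum_indicator.
have hq := quot_vec_free (h \o rep); rewrite /= in hq.
move=> x; rewrite h_parts hq // => k; under eq_bigr do rewrite -mulrA.
have /= <- := sum_by_part (fun k' => h (rep k') * quot_vec k k').
by rewrite -[in RHS](hB (rep k)); apply: eq_bigr => z _; rewrite basis_rep -h_parts.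
Qed.

Lemma card_nonrep_part k :
  #|[pred v | (key v == k) && ~~ is_rep v]| = (part_size k).-1.
Proof.
rewrite -card_part [in RHS](cardD1 (rep k)) inE repK eqxx /=.
apply: eq_card => v; rewrite !inE /is_rep andbC.
by case: (key v =P k) => [-> | _]; rewrite ?andbF.
Qed.

Lemma prod_eigenvalue :
  \prod_v ('X - (eigenvalue v)%:P) =
    \prod_k (('X - (quot_eigenvalue k)%:P)
             * ('X - (#|V|%:R + (part_size k)%:R - 4)%:P) ^+ (part_size k).-1).
Proof.
rewrite (partition_big key predT) //=; apply: eq_bigr => k _.
rewrite (bigD1 (rep k)) ?repK //= /eigenvalue is_rep_rep repK; congr (_ * _).
rewrite -card_nonrep_part -prodr_const; apply: eq_big => [v | v /andP[/eqP<-]].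
  by rewrite !inE /is_rep; case: eqP => [-> | _]; rewrite ?repK ?eqxx ?andbF ?andbT.
by rewrite /is_rep => /negbTE->.
Qed.

Lemma multipartite_DQ_conj_triangular :
  fun_mx (multipartite_DQ key) *m fun_mx basis = fun_mx basis *m fun_mx DQ_triangular.
Proof.
by rewrite !mul_fun_mx; apply/matrixP => i j; rewrite !mxE multipartite_DQ_basis.
Qed.

Lemma char_poly_DQ_triangular :
  char_poly (fun_mx DQ_triangular) = \prod_v ('X - (eigenvalue v)%:P).
Proof.
rewrite (@char_poly_fun_mx_one_offdiag _ _ _ (rep None) (rep (Some i0))).
  by apply: eq_bigr => v _; rewrite /DQ_triangular eqxx.
move=> x y /negbTE xy; rewrite /DQ_triangular xy.
by case: andP => // -[/eqP-> /eqP->]; rewrite !eqxx.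
Qed.

Theorem char_poly_multipartite_DQ :
  char_poly (fun_mx (multipartite_DQ key)) =
    ('X - (2 * m * n - 4)%:R%:P) ^+ (m * (n - 1))
    * ('X - (((2 * m + 1) * n - 4)%:R)%:P) ^+ (m - 1)
    * ('X - (((3 * m - 2) * n - 4)%:R)%:P) ^+ ((m - 1) * n - 1)
    * ('X - (root_eigenvalue t1)%:P) * ('X - (root_eigenvalue t2)%:P).
Proof.
rewrite (char_poly_conj (det_fun_mx_neq0 basis_free) multipartite_DQ_conj_triangular).
rewrite char_poly_DQ_triangular prod_eigenvalue big_option big_split /=.
rewrite (bigD1 i0) //= eqxx prodr_const card_ord.
rewrite (eq_bigr (fun=> 'X - ((2 * m%:R + 1) * n%:R - 4)%:P)) => [|i /negbTE-> //].
rewrite prodr_const cardC1 card_ord natr_card_V -exprM -!subn1 [((n - 1) * m)%N]mulnC.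
have -> : (2 * m%:R - 1) * n%:R + n%:R - 4 = (2 * m * n - 4)%:R :> R.
  by rewrite natrB ?natrM; [ring | nia].
have -> : (2 * m%:R + 1) * n%:R - 4 = ((2 * m + 1) * n - 4)%:R :> R.
  by rewrite natrB ?natrM ?natrD; [ring | nia].
have -> : (2 * m%:R - 1) * n%:R + ((m - 1) * n)%:R - 4 = ((3 * m - 2) * n - 4)%:R :> R.
  by rewrite natrM natr_pred_m natrB ?natrM ?natrB; [ring | lia | nia].
ring.
Qed.

End CompleteMultipartite.
Arguments char_poly_multipartite_DQ {R V m n key rep} i0 repK m_gt2 n_gt0 card_part
  {t1 t2}.


Section NonCommutingGraphMultipartite.
Variables (gT : finGroupType) (G : {group gT}) (m : nat) (i0 : 'I_m).
Variables (key : ncg_vertex G -> option 'I_m) (rep : option 'I_m -> ncg_vertex G).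
Hypothesis repK : cancel rep key.
Hypothesis commute_key :
  forall u v : ncg_vertex G, (val u * val v == val v * val u)%g = (key u == key v).

Lemma ncg_adjE u v : ncg_adj u v = (key u != key v).
Proof.
by rewrite /ncg_adj commute_key; case: (eqVneq u v) => [-> | //]; rewrite eqxx.
Qed.

Lemma ncg_walk1 u v : ncg_walk 1 u v = (key u != key v).
Proof.
apply/existsP/idP => [[w /andP[uw /eqP<-]] | kuv]; first by rewrite -ncg_adjE.
by exists v; rewrite ncg_adjE kuv /=.
Qed.

Lemma ncg_walk2 u v : key u == key v -> ncg_walk 2 u v.
Proof.
move=> /eqP kuv; pose k := if key u is Some _ then None else Some i0.
have kk : key u != k by rewrite /k; case: (key u).
apply/existsP; exists (rep k); rewrite ncg_adjE repK kk /=.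
by apply/existsP; exists v; rewrite ncg_adjE repK -kuv eq_sym kk /=.
Qed.

(* [ncg_dist] only tries walk lengths below [#|V|]. *)
Lemma ncg_dist_multipartite :
  (2 < #|{: ncg_vertex G}|)%N -> forall u v, ncg_dist u v = multipartite_dist key u v.
Proof.
rewrite /ncg_dist /multipartite_dist; case: #|_| => [|[|[|N]]] // _ u v.
cbn -[ncg_walk eq_op]; rewrite [ncg_walk 0 u v]/= ncg_walk1.
case: eqVneq => // _; case: eqVneq => [kuv | //].
by rewrite ncg_walk2 // kuv.
Qed.

Lemma ncg_DQ_multipartite (R : comNzRingType) :
  (2 < #|{: ncg_vertex G}|)%N -> ncg_DQ G R = fun_mx (multipartite_DQ key).
Proof.
move=> V_gt2; apply/matrixP => i j; rewrite !mxE /multipartite_DQ /multipartite_trans.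
rewrite ncg_dist_multipartite // (inj_eq enum_val_inj); congr (_ * _%:R + _).
by apply: eq_bigr => u _; rewrite ncg_dist_multipartite.
Qed.

End NonCommutingGraphMultipartite.
Arguments ncg_DQ_multipartite {gT G m} i0 {key rep} repK commute_key {R}.

Section MetacyclicGroup.
Local Open Scope group_scope.
Variables (gT : finGroupType) (G : {group gT}) (a b : gT) (m n : nat).
Hypotheses (m_odd : odd m) (m_gt2 : (2 < m)%N) (n_gt0 : (0 < n)%N).
Hypotheses (defG : G :=: <<[set a; b]>>) (card_G : #|G| = (2 * m * n)%N).
Hypotheses (a_m : a ^+ m = 1) (b_2n : b ^+ (2 * n) = 1) (bab : b * a * b^-1 = a^-1).

Lemma n2_gt1 : (1 < 2 * n)%N. Proof. lia. Qed.

Lemma mem_a : a \in G. Proof. by rewrite defG mem_gen // set21. Qed.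
Lemma mem_b : b \in G. Proof. by rewrite defG mem_gen // set22. Qed.

Lemma b_norm_cycle_a : b \in 'N(<[a]>).
Proof.
rewrite -[b]invgK groupV; apply/normP.
by rewrite -cycleJ conjgE invgK mulgA bab cycleV.
Qed.

Lemma metacyclic_orders : [/\ #[a] = m, #[b] = (2 * n)%N & #|<[a]> :&: <[b]>| = 1%N].
Proof.
have G_sub : G \subset <[a]> * <[b]>.
  rewrite -norm_joinEr ?cycle_subG ?b_norm_cycle_a // defG genS //.
  by rewrite subUset !sub1set !in_setU !cycle_id ?orbT.
have a_le : (#[a] <= m)%N by apply: dvdn_leq; [lia | rewrite order_dvdn a_m].
have b_le : (#[b] <= 2 * n)%N by apply: dvdn_leq; [lia | rewrite order_dvdn b_2n].
have ab_ge : (2 * m * n * #|<[a]> :&: <[b]>| <= #[a] * #[b])%N.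
  rewrite -card_G /order (mul_cardG <[a]> <[b]>).
  exact: leq_mul (subset_leq_card G_sub) (leqnn _).
have I_gt0 : (0 < #|<[a]> :&: <[b]>|)%N := cardG_gt0 _.
by have := leq_mul a_le b_le; split; nia.
Qed.


Lemma order_a : #[a] = m. Proof. by case: metacyclic_orders. Qed.
Lemma order_b : #[b] = (2 * n)%N. Proof. by case: metacyclic_orders. Qed.

Lemma cycle_a_cap_b z : z \in <[a]> -> z \in <[b]> -> z = 1.
Proof.
case: metacyclic_orders => _ _ /eqP; rewrite -trivg_card1 => /eqP ab1 za zb.
by apply/set1gP; rewrite -ab1 inE za.
Qed.

Lemma cycle_a_sqr_eq1 z : z \in <[a]> -> (z * z == 1) = (z == 1).
Proof.
move=> za; apply/eqP/eqP => [zz | ->]; last by rewrite mulg1.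
have : (#[z] %| gcdn 2 m)%N.
  by rewrite dvdn_gcd order_dvdn expg2 zz eqxx -order_a order_dvdG.
have /eqP-> : coprime 2 m by rewrite coprime2n.
by rewrite dvdn1 order_eq1 => /eqP.
Qed.


Lemma expa_conj_expVb j k :
  (a ^+ k) ^ (b^-1 ^+ j) = if odd j then (a ^+ k)^-1 else a ^+ k.
Proof.
have a_conj : a ^ b^-1 = a^-1 by rewrite conjgE invgK mulgA bab.
elim: j => [|j IH]; first by rewrite conjg1.
rewrite expgSr conjgM IH /=.
by case: (odd j); rewrite /= ?conjVg conjXg a_conj expVgn ?invgK.
Qed.

Lemma expb_mul_expa j k :
  b ^+ j * a ^+ k = (if odd j then (a ^+ k)^-1 else a ^+ k) * b ^+ j.
Proof. by rewrite conjgCV -expVgn expa_conj_expVb. Qed.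

Definition mc_pair := ('I_m * 'I_(2 * n))%type.

Definition mc_elt (w : mc_pair) : gT := a ^+ w.1 * b ^+ w.2.

Lemma mc_elt_in w : mc_elt w \in G.
Proof. by rewrite groupM ?groupX ?mem_a ?mem_b. Qed.

Lemma eq_expa (i k : 'I_m) : (a ^+ i == a ^+ k) = (i == k).
Proof. by rewrite eq_expg_mod_order order_a !modn_small. Qed.

Lemma eq_expb (j l : 'I_(2 * n)) : (b ^+ j == b ^+ l) = (j == l).
Proof. by rewrite eq_expg_mod_order order_b !modn_small. Qed.

Lemma expa_eq1 (i : 'I_m) : (a ^+ i == 1) = (val i == 0%N).
Proof.
rewrite -order_dvdn order_a; case: i => -[|i] lt_im /=; first by rewrite dvdn0.
by apply: contraTF lt_im => /dvdn_leq; rewrite -leqNgt; apply.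
Qed.

Lemma mc_elt_inj : injective mc_elt.
Proof.
move=> [i j] [k l]; rewrite /mc_elt /= => e.
have ab : (a ^+ k)^-1 * a ^+ i = b ^+ l * (b ^+ j)^-1.
  have := congr1 (fun g => (a ^+ k)^-1 * g * (b ^+ j)^-1) e.
  by rewrite /= !mulgA mulgK -(mulgA _ (a ^+ k)) mulKg.
have ab1 : (a ^+ k)^-1 * a ^+ i = 1.
  by apply: cycle_a_cap_b; [|rewrite ab]; rewrite groupM ?groupV ?mem_cycle.
move: (ab1) => /mulg1_eq/eqP; rewrite invgK eq_expa => /eqP->.
by move: ab1; rewrite ab => /mulg1_eq/eqP; rewrite eqg_inv eq_expb => /eqP->.
Qed.

Lemma imset_mc_elt : mc_elt @: setT = G.
Proof.
apply/eqP; rewrite eqEcard; apply/andP; split.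
  by apply/subsetP => _ /imsetP[w _ ->]; apply: mc_elt_in.
rewrite card_imset ?cardsT ?card_prod ?card_ord ?card_G; [lia | exact: mc_elt_inj].
Qed.

Definition part_pair (k : option 'I_m) : mc_pair :=
  match k with
  | None => (Ordinal (ltnW m_gt2), Ordinal (ltnW n2_gt1))
  | Some i => (i, Ordinal n2_gt1)
  end.

Definition mc_exponents (g : gT) : mc_pair :=
  odflt (part_pair None) [pick w | mc_elt w == g].

Lemma mc_exponentsK g : g \in G -> mc_elt (mc_exponents g) = g.
Proof.
rewrite /mc_exponents; case: pickP => [w /eqP // | no_w].
by rewrite -imset_mc_elt => /imsetP[w _ e]; move: (no_w w); rewrite e eqxx.
Qed.

Lemma mc_eltK w : mc_exponents (mc_elt w) = w.
Proof. by apply: mc_elt_inj; rewrite mc_exponentsK ?mc_elt_in. Qed.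

Lemma mc_elt_commute (i k : 'I_m) (j l : 'I_(2 * n)) :
  (mc_elt (i, j) * mc_elt (k, l) == mc_elt (k, l) * mc_elt (i, j)) =
  if odd j then (if odd l then i == k else val k == 0%N)
  else (if odd l then val i == 0%N else true).
Proof.
have mulE (i' k' : 'I_m) (j' l' : 'I_(2 * n)) :
    mc_elt (i', j') * mc_elt (k', l') =
    a ^+ i' * (if odd j' then (a ^+ k')^-1 else a ^+ k') * b ^+ (j' + l').
  by rewrite /mc_elt /= mulgA -(mulgA _ (b ^+ j')) expb_mul_expa !mulgA expgD mulgA.
rewrite !mulE addnC (inj_eq (mulIg _)).
have cik : commute (a ^+ i) (a ^+ k) by apply: commuteX2.
have a_sqr w : w \in <[a]> -> (w == 1) = (w * w == 1) by move/cycle_a_sqr_eq1->.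
case: (odd j); case: (odd l) => /=.
- rewrite eq_mulgV1 invMg !invgK -a_sqr ?groupM ?groupV ?mem_cycle //.
  by rewrite -eq_mulgV1 eq_expa.
- rewrite -cik (inj_eq (mulgI _)) eqg_invLR eq_mulgV1 invgK.
  by rewrite -a_sqr ?mem_cycle // expa_eq1.
- rewrite cik (inj_eq (mulgI _)) eq_mulgV1 invgK.
  by rewrite -a_sqr ?mem_cycle // expa_eq1.
by rewrite cik eqxx.
Qed.

Definition mc_central (w : mc_pair) : bool := (val w.1 == 0%N) && ~~ odd w.2.

Lemma mc_elt_center w : (mc_elt w \in 'Z(G)) = mc_central w.
Proof.
case: w => i j; apply/centerP/idP => [[_ cz] | /andP[i0 j_even]].
  have /eqP := cz _ (mc_elt_in (part_pair None)).
  have /eqP := cz _ (mc_elt_in (part_pair (Some i))).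
  by rewrite !mc_elt_commute /mc_central /=; case: (odd j) => //= ->.
split=> [|g gG]; first exact: mc_elt_in.
rewrite -(mc_exponentsK _ gG); case: (mc_exponents g) => k l.
by apply/eqP; rewrite mc_elt_commute (negbTE j_even) i0; case: (odd l).
Qed.

Definition mc_part (w : mc_pair) : option 'I_m := if odd w.2 then Some w.1 else None.

Definition mc_key (v : ncg_vertex G) : option 'I_m := mc_part (mc_exponents (val v)).

Lemma mc_elt_vertex w : (mc_elt w \in G :\: 'Z(G)) = ~~ mc_central w.
Proof. by rewrite inE mc_elt_center mc_elt_in andbT. Qed.

Lemma vertex_exponentsK (v : ncg_vertex G) : mc_elt (mc_exponents (val v)) = val v.
Proof. by apply: mc_exponentsK; have := valP v; rewrite inE => /andP[]. Qed.

Lemma vertex_noncentral (v : ncg_vertex G) : ~~ mc_central (mc_exponents (val v)).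
Proof. by rewrite -mc_elt_vertex vertex_exponentsK (valP v). Qed.

Lemma part_pair_vertex k : mc_elt (part_pair k) \in G :\: 'Z(G).
Proof. by rewrite mc_elt_vertex /mc_central; case: k => [i|] /=; rewrite ?andbF. Qed.

Definition mc_rep (k : option 'I_m) : ncg_vertex G :=
  exist (fun x => x \in G :\: 'Z(G)) _ (part_pair_vertex k).

Lemma mc_repK : cancel mc_rep mc_key.
Proof. by move=> k; rewrite /mc_key /= mc_eltK; case: k. Qed.

Lemma commute_mc_key u v : (val u * val v == val v * val u) = (mc_key u == mc_key v).
Proof.
rewrite /mc_key; move: (vertex_noncentral u) (vertex_noncentral v).
move: (vertex_exponentsK u) (vertex_exponentsK v).
case: (mc_exponents (val u)) => i j; case: (mc_exponents (val v)) => k l <- <-.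
rewrite mc_elt_commute /mc_central /mc_part /=.
case: (odd j); case: (odd l); rewrite /= ?andbT //.
  by move=> _ /negbTE->.
by move=> /negbTE->.
Qed.

Lemma card_mc_key k : #|[pred v | mc_key v == k]| = part_size m n k.
Proof.
have exps_inj : injective (fun v : ncg_vertex G => mc_exponents (val v)).
  by move=> u v e; apply: val_inj; rewrite -vertex_exponentsK e vertex_exponentsK.
rewrite -(card_imset _ exps_inj).
have -> : [set mc_exponents (val v) | v in [pred v | mc_key v == k]] =
          [set w | ~~ mc_central w & mc_part w == k].
  apply/setP => w; rewrite inE; apply/imsetP/andP => [[v vk ->] | [nw wk]].
    by rewrite vertex_noncentral.
  have wV : mc_elt w \in G :\: 'Z(G) by rewrite mc_elt_vertex.
  exists (exist (fun x => x \in G :\: 'Z(G)) _ wV); last by rewrite /= mc_eltK.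
  by rewrite inE /mc_key /= mc_eltK.
case: k => [i|] /=.
  have -> : [set w | ~~ mc_central w & mc_part w == Some i] =
            setX [set i] [set j : 'I_(2 * n) | odd j == true].
    apply/setP => -[x y]; rewrite !inE /mc_central /mc_part /=.
    by case: (odd y); rewrite /= ?andbF // (inj_eq Some_inj) andbC.
  by rewrite cardsX cards1 card_ord_parity mul1n.
have -> : [set w | ~~ mc_central w & mc_part w == None] =
          setX (~: [set Ordinal (ltnW (ltnW m_gt2))])
               [set j : 'I_(2 * n) | odd j == false].
  apply/setP => -[x y]; rewrite !inE /mc_central /mc_part /= -val_eqE /=.
  by case: (odd y); rewrite /= ?andbF ?andbT.
by rewrite cardsX cardsC1 card_ord card_ord_parity subn1.
Qed.

Lemma card_ncg_vertex_gt2 : (2 < #|{: ncg_vertex G}|)%N.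
Proof.
apply: ltn_trans m_gt2 _.
by have := leq_card _ (can_inj mc_repK); rewrite card_option card_ord.
Qed.

Lemma ncg_metacyclic_multipartite :
  [/\ cancel mc_rep mc_key,
      forall u v, (val u * val v == val v * val u) = (mc_key u == mc_key v),
      forall k, #|[pred v | mc_key v == k]| = part_size m n k
    & (2 < #|{: ncg_vertex G}|)%N].
Proof.
split; [exact: mc_repK | exact: commute_mc_key | exact: card_mc_key | ].
exact: card_ncg_vertex_gt2.
Qed.

End MetacyclicGroup.
Arguments ncg_metacyclic_multipartite {gT G a b m n}.

Theorem theorem6p5 (R : rcfType) (gT : finGroupType) (G : {group gT})
  (a b : gT) (m n : nat) (t1 t2 : R) :
  odd m -> (2 < m)%N -> (1 <= n)%N ->
  (* G = M_{2mn} = < a, b | a^m = b^{2n} = 1, b a b^-1 = a^-1 >, of order 2mn *)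
  G :=: <<[set a; b]>>%g -> #|G| = (2 * m * n)%N ->
  (a ^+ m = 1)%g -> (b ^+ (2 * n) = 1)%g -> (b * a * b^-1 = a^-1)%g ->
  (* t1, t2 are the two roots of (m-1)x^2 - (2m-5)x - m = 0 *)
  (m - 1)%:R *: (('X - t1%:P) * ('X - t2%:P))
    = (m - 1)%:R *: 'X^2 - (2 * m - 5)%:R *: 'X - (m%:R)%:P ->
  char_poly (ncg_DQ G R) =
    ('X - (2 * m * n - 4)%:R%:P) ^+ (m * (n - 1))
  * ('X - (((2 * m + 1) * n - 4)%:R)%:P) ^+ (m - 1)
  * ('X - (((3 * m - 2) * n - 4)%:R)%:P) ^+ ((m - 1) * n - 1)
  * ('X - (n%:R * t1 * (m - 1)%:R + (3 * m * n + n - 4)%:R)%:P)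
  * ('X - (n%:R * t2 * (m - 1)%:R + (3 * m * n + n - 4)%:R)%:P).
Proof.
move=> m_odd m_gt2 n_gt0 defG card_G a_m b_2n bab.
move=> /scaled_quadratic_roots[t1_root roots_sum].
have [repK commute_key card_part V_gt2] :=
  ncg_metacyclic_multipartite m_odd m_gt2 n_gt0 defG card_G a_m b_2n bab.
pose i0 : 'I_m := Ordinal (ltnW (ltnW m_gt2)).
rewrite (ncg_DQ_multipartite i0 repK commute_key V_gt2).
by rewrite (char_poly_multipartite_DQ i0 repK m_gt2 n_gt0 card_part t1_root roots_sum).
Qed.
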